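(* Let $\Phi$ be a symbol of the form $\Phi(s)=c_0s+\phi(s)$ (with $c_0$ a non-negative integer and $\phi$ a convergent Dirichlet series) such that $D_\Phi f=f'\circ\Phi$ is a bounded operator on $\mathcal{H}^2$. Then $D_\Phi$ is self-adjoint on $\mathcal{H}^2$ if, and only if, $\Phi(s)=s+c_1$ for some real constant $c_1$.
   Context: $\mathcal{H}^2$ is the Hilbert space of Dirichlet series $f(s)=\sum_{n\ge1}a_nn^{-s}$ with $\|f\|_{\mathcal{H}^2}^2=\sum_n|a_n|^2<\infty$, with inner product $\langle f,g\rangle=\sum a_n\overline{b_n}$. *)

From Stdlib Require Import Reals.
From Coquelicot Require Import Coquelicot.
Open Scope R_scope.

(* Convention: a Dirichlet series sum_{n>=1} a_n n^{-s} is represented by the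
   coefficient sequence  a : nat -> C  with  a k  the coefficient of (k+1)^{-s}. *)

(* n^{-s} for a positive integer n and complex s = sigma + i t:
   n^{-s} = exp(-sigma log n) (cos(t log n) - i sin(t log n)). *)
Definition npow_neg (n : nat) (s : C) : C :=
  (exp (- Re s * ln (INR n)) * cos (Im s * ln (INR n)),
   - (exp (- Re s * ln (INR n)) * sin (Im s * ln (INR n)))).

Definition dterm (a : nat -> C) (s : C) (k : nat) : C :=
  Cmult (a k) (npow_neg (S k) s).

Definition DS_has (a : nat -> C) (s : C) (v : C) : Prop :=
  is_series (dterm a s) v.

Definition dderiv (a : nat -> C) (k : nat) : C :=
  Cmult (a k) (RtoC (- ln (INR (S k)))).

Definition in_H2 (a : nat -> C) : Prop :=
  ex_series (fun k => (Cmod (a k))^2).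

Definition H2norm (a : nat -> C) : R :=
  sqrt (Series (fun k => (Cmod (a k))^2)).

Definition H2inner (a b : nat -> C) : C :=
  (Series (fun k => Re (Cmult (a k) (Cconj (b k)))),
   Series (fun k => Im (Cmult (a k) (Cconj (b k))))).

(* The symbol Phi(s) = c0 s + phi(s), phi with coefficients b.
   DPhi_rel c0 b f g : g in H^2 and g = f' o Phi on some right half-plane
   (where phi converges, Re Phi(s) > 1/2 so that f'(Phi(s)) converges). *)
Definition DPhi_rel (c0 : nat) (b : nat -> C) (f g : nat -> C) : Prop :=
  in_H2 g /\
  exists sigma0 : R, forall s : C, sigma0 < Re s ->
    exists p : C, DS_has b s p /\
      let w := Cplus (Cmult (RtoC (INR c0)) s) p in
      1/2 < Re w /\
      exists v : C, DS_has g s v /\ DS_has (dderiv f) w v.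

Definition DPhi_bounded (c0 : nat) (b : nat -> C) : Prop :=
  exists M : R, forall f, in_H2 f ->
    exists g, DPhi_rel c0 b f g /\ H2norm g <= M * H2norm f.

Definition DPhi_selfadjoint (c0 : nat) (b : nat -> C) : Prop :=
  forall f h g k, in_H2 f -> in_H2 h ->
    DPhi_rel c0 b f g -> DPhi_rel c0 b h k ->
    H2inner g h = H2inner f k.

From Pilot Require Import Defs.
From Stdlib Require Import Reals Lra Lia ZArith.
From Coquelicot Require Import Coquelicot.
Open Scope R_scope.

(* Test D_Phi on the monomials e_n = n^{-s} and evaluate Dirichlet series at the
   real points s = N -> oo.  A series with polynomially bounded coefficients that
   vanish below n behaves like a_n n^{-N}, so its coefficients are recovered from
   these values.  Since D_Phi e_n = -log n * n^{-c0 s - phi(s)} and phi(N) tends to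
   the constant term b_1 of phi, D_Phi e_n vanishes below index n^{c0} and, for
   n >= 2, does not vanish there.  Self-adjointness gives
   <D_Phi e_n, e_m> = conj <D_Phi e_m, e_n>; for n = 2 this rules out c0 = 0 and
   c0 >= 2.  For c0 = 1 every D_Phi e_n is a multiple of e_n, so 2^{-phi(N)} is
   constant in N, which forces phi(N) = b_1 for large N and then phi = b_1; the
   diagonal entries at n = 2, 3 are real, and log 3 / log 2 is irrational, so b_1
   is real.  Conversely, for Phi(s) = s + c1 the operator is diagonal with real
   entries -log n * n^{-c1}. *)

Lemma INR_S_pos (k : nat) : 0 < INR (S k).
Proof. apply lt_0_INR. lia. Qed.

Lemma exp_INR_mult (N : nat) (y : R) : exp (INR N * y) = exp y ^ N.
Proof.
  induction N as [|N IH].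
  - rewrite Rmult_0_l. apply exp_0.
  - rewrite S_INR, Rmult_plus_distr_r, Rmult_1_l, exp_plus, IH. simpl. ring.
Qed.

Lemma exp_le (x y : R) : x <= y -> exp x <= exp y.
Proof. intros [Hlt|Heq]; [left; apply exp_increasing, Hlt | right; rewrite Heq; reflexivity]. Qed.

Lemma ln_INR_S_nonneg (n : nat) : 0 <= ln (INR (S n)).
Proof. rewrite <- ln_1. apply ln_le; [lra|]. apply (le_INR 1). lia. Qed.

Lemma ln_INR_S_pos (n : nat) : (1 <= n)%nat -> 0 < ln (INR (S n)).
Proof. intros Hn. rewrite <- ln_1. apply ln_increasing; [lra|]. apply lt_1_INR. lia. Qed.

Lemma ln_INR_2_le_1 : ln (INR 2) <= 1.
Proof.
  assert (E2 : INR 2 = 2) by (simpl; ring).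
  pose proof (exp_ineq1_le (ln (INR 2))) as H. rewrite exp_ln in H by lra. lra.
Qed.

Lemma Rabs_INR_ratio_lt_1 (p q : nat) : (0 < p)%nat -> (p < q)%nat -> Rabs (INR p / INR q) < 1.
Proof.
  intros Hp Hpq. assert (0 < INR p) by (apply lt_0_INR; exact Hp).
  assert (INR p < INR q) by (apply lt_INR; exact Hpq).
  rewrite Rabs_pos_eq by (apply Rdiv_le_0_compat; lra).
  apply (Rmult_lt_reg_r (INR q)); [lra|]. unfold Rdiv. rewrite Rmult_assoc, Rinv_l; lra.
Qed.

Lemma pow_ratio_le (x y z : R) (m e : nat) : 0 < y <= x -> 0 <= z ->
  (z / x) ^ (m + e) * x ^ m <= (z / y) ^ (m + e) * y ^ m.
Proof.
  intros Hyx Hz.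
  replace ((z / x) ^ (m + e) * x ^ m) with ((z / x * x) ^ m * (z / x) ^ e)
    by (rewrite pow_add, Rpow_mult_distr; ring).
  replace ((z / y) ^ (m + e) * y ^ m) with ((z / y * y) ^ m * (z / y) ^ e)
    by (rewrite pow_add, Rpow_mult_distr; ring).
  replace (z / x * x) with z by (field; lra). replace (z / y * y) with z by (field; lra).
  apply Rmult_le_compat_l; [apply pow_le; lra|].
  apply pow_incr. split.
  - apply Rdiv_le_0_compat; lra.
  - apply Rmult_le_compat_l; [lra|]. apply Rinv_le_contravar; lra.
Qed.

Lemma inv_sq_le_telescope (x : R) : 1 <= x -> / (x * x) <= 2 * (/ x - / (x + 1)).
Proof.
  intros Hx. replace (2 * (/ x - / (x + 1))) with (2 / (x * (x + 1))) by (field; lra).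
  apply (Rmult_le_reg_r (x * x * (x + 1))); [nra|]. field_simplify; nra.
Qed.

Lemma bounded_of_eventually_bounded (f : nat -> R) (K : nat) (B : R) :
  (forall k, (K <= k)%nat -> f k <= B) -> exists B', forall k, f k <= B'.
Proof.
  revert B. induction K as [|K IH]; intros B Hf.
  - exists B. intros k. apply Hf. lia.
  - apply (IH (Rmax B (f K))). intros k Hk.
    destruct (Nat.eq_dec k K) as [->|Hne]; [apply Rmax_r|].
    eapply Rle_trans; [apply Hf; lia | apply Rmax_l].
Qed.

Lemma angle_eq_of_cos_sin (a a' : R) :
  cos a = cos a' -> sin a = sin a' -> Rabs (a - a') < 2 * PI -> a = a'.
Proof.
  intros Hc Hs Hlt.
  assert (Hs0 : sin (a - a') = 0) by (rewrite sin_minus, Hc, Hs; ring).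
  assert (Hc1 : cos (a - a') = 1).
  { rewrite cos_minus, Hc, Hs. pose proof (sin2_cos2 a'). unfold Rsqr in *. lra. }
  destruct (sin_eq_0_0 _ Hs0) as [k Hk]. pose proof PI_RGT_0.
  assert (Hk2 : Rabs (IZR k) < 2).
  { rewrite Hk, Rabs_mult, (Rabs_pos_eq PI) in Hlt by lra. apply (Rmult_lt_reg_r PI); lra. }
  apply Rabs_def2 in Hk2. destruct Hk2 as [Hk2 Hk2'].
  assert (-2 < k)%Z by (apply lt_IZR; simpl; lra). apply lt_IZR in Hk2.
  assert (Hk3 : (k = 0 \/ k = 1 \/ k = -1)%Z) by lia.
  destruct Hk3 as [Hk0|[Hk0|Hk0]]; subst k.
  - rewrite Rmult_0_l in Hk. lra.
  - rewrite Hk, Rmult_1_l, cos_PI in Hc1. lra.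
  - rewrite Hk in Hc1. replace (IZR (-1) * PI) with (- PI) in Hc1 by (simpl; ring).
    rewrite cos_neg, cos_PI in Hc1. lra.
Qed.

Lemma pow2_neq_pow3 (l k : nat) : (1 <= l)%nat -> (2 ^ l <> 3 ^ k)%nat.
Proof.
  intros Hl E. apply (f_equal Nat.even) in E.
  rewrite Nat.even_pow in E by lia.
  destruct k as [|k]; [|rewrite Nat.even_pow in E by lia]; discriminate.
Qed.

Lemma ln2_ln3_incommensurable (l k : Z) :
  IZR l * ln (INR 2) = IZR k * ln (INR 3) -> k = 0%Z.
Proof.
  intros E.
  assert (H2 : 0 < ln (INR 2)) by (apply (ln_INR_S_pos 1); lia).
  assert (H3 : 0 < ln (INR 3)) by (apply (ln_INR_S_pos 2); lia).
  apply (f_equal Rabs) in E. rewrite !Rabs_mult, !(Rabs_pos_eq (ln _)), !Rabs_Zabs in E by lra.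
  rewrite <- (Zabs2Nat.id_abs l), <- (Zabs2Nat.id_abs k), <- !INR_IZR_INZ in E.
  apply (f_equal exp) in E. rewrite !exp_INR_mult, !exp_ln, <- !pow_INR in E by (simpl; lra).
  apply INR_eq in E.
  destruct (Nat.eq_dec (Z.abs_nat k) 0) as [Hk|Hk]; [lia|exfalso].
  destruct (Nat.eq_dec (Z.abs_nat l) 0) as [Hl|Hl].
  - rewrite Hl in E. pose proof (Nat.pow_gt_1 3 (Z.abs_nat k) ltac:(lia) Hk). simpl in E. lia.
  - exact (pow2_neq_pow3 (Z.abs_nat l) (Z.abs_nat k) ltac:(lia) E).
Qed.

Lemma sin_ln2_ln3_eq_0 (t : R) :
  sin (t * ln (INR 2)) = 0 -> sin (t * ln (INR 3)) = 0 -> t = 0.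
Proof.
  intros S2 S3.
  destruct (sin_eq_0_0 _ S2) as [k Hk]. destruct (sin_eq_0_0 _ S3) as [l Hl].
  assert (H3 : 0 < ln (INR 3)) by (apply (ln_INR_S_pos 2); lia).
  assert (E : IZR l * ln (INR 2) = IZR k * ln (INR 3)).
  { destruct (Req_dec t 0) as [->|Ht].
    - rewrite Rmult_0_l in Hk, Hl. pose proof PI_RGT_0.
      apply eq_sym, Rmult_integral in Hk. apply eq_sym, Rmult_integral in Hl.
      assert (IZR k = 0) by lra. assert (IZR l = 0) by lra. nra.
    - apply (Rmult_eq_reg_l t); [|exact Ht].
      transitivity (IZR l * (t * ln (INR 2))); [ring|].
      transitivity (IZR k * (t * ln (INR 3))); [rewrite Hk, Hl; ring | ring]. }
  apply ln2_ln3_incommensurable in E. subst k.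
  rewrite Rmult_0_l in Hk. apply Rmult_integral in Hk. destruct Hk as [|Hk]; [assumption|].
  pose proof (ln_INR_S_pos 1 ltac:(lia)). simpl in *. lra.
Qed.

Lemma Cmod_RtoC_mult (r : R) (x : C) : 0 <= r -> Cmod (Cmult (RtoC r) x) = r * Cmod x.
Proof. intros Hr. rewrite Cmod_mult, Cmod_R, Rabs_pos_eq by exact Hr. reflexivity. Qed.

Lemma Rabs_Im_le_Cmod (z : C) : Rabs (Im z) <= Cmod z.
Proof. eapply Rle_trans; [apply Rmax_r | apply Rmax_Cmod]. Qed.

Lemma Cconj_R0 : Cconj (RtoC 0) = RtoC 0.
Proof. unfold Cconj, RtoC. simpl. rewrite Ropp_0. reflexivity. Qed.

Lemma Cmult_RtoC_reg_l (r : R) (x y : C) : r <> 0 -> Cmult (RtoC r) x = Cmult (RtoC r) y -> x = y.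
Proof.
  intros Hr E. apply (f_equal (Cmult (RtoC (/ r)))) in E.
  rewrite !Cmult_assoc, <- RtoC_mult, Rinv_l, !Cmult_1_l in E by exact Hr. exact E.
Qed.

Lemma is_series_C_unique (a : nat -> C) (l1 l2 : C) :
  is_series a l1 -> is_series a l2 -> l1 = l2.
Proof. apply filterlim_locally_unique. Qed.

Lemma is_series_C_ext (a a' : nat -> C) (l : C) :
  is_series a l -> (forall k, a k = a' k) -> is_series a' l.
Proof. intros Ha E. exact (is_series_ext a a' l E Ha). Qed.

Lemma is_series_C_eps (a : nat -> C) (l : C) : is_series a l ->
  forall eps, 0 < eps -> exists N0, forall N, (N0 <= N)%nat ->
    Cmod (Cminus (sum_n a N) l) < eps.
Proof.
  intros H eps Heps.
  destruct (proj1 (filterlim_locally_ball_norm _ _) H (mkposreal _ Heps)) as [N0 HN].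
  exists N0. exact HN.
Qed.

Section SingleTerm.
Context {K : AbsRing} {V : NormedModule K}.

Lemma sum_n_single (a : nat -> V) (n : nat) :
  (forall k, k <> n -> a k = zero) ->
  forall N, sum_n a N = if Nat.leb n N then a n else zero.
Proof.
  intros Ha N. induction N as [|N IH].
  - rewrite sum_O. destruct n as [|n]; [reflexivity|]. apply Ha. lia.
  - rewrite sum_Sn, IH. destruct (Nat.eq_dec (S N) n) as [<-|Hne].
    + rewrite Nat.leb_refl, (proj2 (Nat.leb_gt _ N)) by lia. apply plus_zero_l.
    + rewrite (Ha _ Hne), plus_zero_r.
      destruct (Nat.leb_spec n N), (Nat.leb_spec n (S N)); solve [reflexivity | lia].
Qed.

Lemma is_series_single (a : nat -> V) (n : nat) :
  (forall k, k <> n -> a k = zero) -> is_series a (a n).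
Proof.
  intros Ha. apply filterlim_ext_loc with (fun _ => a n); [|apply filterlim_const].
  exists n. intros N HN. rewrite (sum_n_single a n Ha), (proj2 (Nat.leb_le n N)) by exact HN.
  reflexivity.
Qed.

End SingleTerm.

Lemma Series_single (a : nat -> R) (n : nat) :
  (forall k, k <> n -> a k = 0) -> Series a = a n.
Proof. intros Ha. apply is_series_unique, is_series_single, Ha. Qed.

Lemma sum_n_vanishing_below {G : AbelianMonoid} (a : nat -> G) (j : nat) :
  (forall k, (k < j)%nat -> a k = zero) -> sum_n a j = a j.
Proof.
  intros Ha. destruct j as [|j]; [apply sum_O|].
  rewrite sum_Sn, (sum_n_ext_loc a (fun _ => zero)) by (intros; apply Ha; lia).
  unfold sum_n. rewrite sum_n_m_const_zero. apply plus_zero_l.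
Qed.

Lemma term_le_Series (a : nat -> R) (k : nat) :
  (forall n, 0 <= a n) -> ex_series a -> a k <= Series a.
Proof.
  intros Ha Hex.
  assert (Ek : Series (fun n => if Nat.eqb n k then a k else 0) = a k).
  { rewrite (Series_single _ k), Nat.eqb_refl; [reflexivity|].
    intros n Hn. rewrite (proj2 (Nat.eqb_neq n k) Hn). reflexivity. }
  rewrite <- Ek. apply Series_le; [|exact Hex].
  intros n. destruct (Nat.eqb_spec n k) as [->|]; split; solve [apply Ha | lra].
Qed.

Lemma is_lim_seq_scal_geom (A r : R) : Rabs r < 1 -> is_lim_seq (fun N => A * r ^ N) 0.
Proof.
  intros Hr. rewrite <- (Rmult_0_r A).
  apply (is_lim_seq_scal_l _ A 0), is_lim_seq_geom, Hr.
Qed.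

Lemma le_0_of_le_geom (x A1 A2 r1 r2 : R) (N0 : nat) :
  Rabs r1 < 1 -> Rabs r2 < 1 ->
  (forall N, (N0 <= N)%nat -> x <= A1 * r1 ^ N + A2 * r2 ^ N) -> x <= 0.
Proof.
  intros Hr1 Hr2 Hx.
  assert (L : is_lim_seq (fun N => A1 * r1 ^ N + A2 * r2 ^ N) (0 + 0)).
  { apply is_lim_seq_plus'; apply is_lim_seq_scal_geom; assumption. }
  rewrite Rplus_0_r in L. change (Rbar_le x 0).
  apply (is_lim_seq_le_loc (fun _ => x) _ x 0 (ex_intro _ N0 Hx) (is_lim_seq_const x) L).
Qed.

Lemma npow_neg_nat (m N : nat) : (0 < m)%nat ->
  npow_neg m (RtoC (INR N)) = RtoC (/ INR m ^ N).
Proof.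
  intros Hm. unfold npow_neg. simpl.
  rewrite Rmult_0_l, cos_0, sin_0, Rmult_0_r, Rmult_1_r, Ropp_0.
  rewrite Ropp_mult_distr_l_reverse, exp_Ropp, exp_INR_mult, exp_ln by (apply lt_0_INR; exact Hm).
  reflexivity.
Qed.

Lemma npow_neg_real (m : nat) (c : R) : npow_neg m (RtoC c) = RtoC (exp (- c * ln (INR m))).
Proof.
  unfold npow_neg, RtoC. simpl. rewrite Rmult_0_l, cos_0, sin_0, Rmult_0_r, Rmult_1_r, Ropp_0.
  reflexivity.
Qed.

Lemma npow_neg_shift (c0 m N : nat) (p : C) : (0 < m)%nat ->
  npow_neg m (Cplus (Cmult (RtoC (INR c0)) (RtoC (INR N))) p) =
  Cmult (RtoC (/ INR m ^ (c0 * N))) (npow_neg m p).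
Proof.
  intros Hm. destruct p as [x y]. unfold npow_neg, Cplus, Cmult, RtoC. simpl.
  replace (- (INR c0 * INR N - 0 * 0 + x) * ln (INR m)) with
    (- (INR (c0 * N) * ln (INR m)) + - x * ln (INR m)) by (rewrite mult_INR; ring).
  rewrite exp_plus, exp_Ropp, exp_INR_mult, exp_ln by (apply lt_0_INR; exact Hm).
  replace (INR c0 * 0 + 0 * INR N + y) with y by ring.
  f_equal; ring.
Qed.

Lemma Cmod_npow_neg (m : nat) (p : C) : Cmod (npow_neg m p) = exp (- Re p * ln (INR m)).
Proof.
  unfold npow_neg, Cmod. simpl.
  set (E := exp (- Re p * ln (INR m))). set (t := Im p * ln (INR m)).
  replace (E * cos t * (E * cos t * 1) + - (E * sin t) * (- (E * sin t) * 1))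
    with (Rsqr E * (Rsqr (sin t) + Rsqr (cos t))) by (unfold Rsqr; ring).
  rewrite sin2_cos2, Rmult_1_r, sqrt_Rsqr; [reflexivity|]. left. apply exp_pos.
Qed.

Lemma npow_neg_inj_strip (m : nat) (p p' : C) : (2 <= m)%nat ->
  npow_neg m p = npow_neg m p' -> Rabs (Im p - Im p') * ln (INR m) < 2 * PI -> p = p'.
Proof.
  intros Hm E Hlt.
  assert (HL : 0 < ln (INR m)) by (rewrite <- ln_1; apply ln_increasing; [lra | apply lt_1_INR; lia]).
  assert (Hre : Re p = Re p').
  { pose proof (f_equal Cmod E) as Em. rewrite !Cmod_npow_neg in Em. apply exp_inv in Em.
    apply (Rmult_eq_reg_r (ln (INR m))); lra. }
  unfold npow_neg in E. rewrite Hre in E. injection E as Ecos Esin.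
  pose proof (exp_pos (- Re p' * ln (INR m))) as HE.
  assert (Him : Im p * ln (INR m) = Im p' * ln (INR m)).
  { apply angle_eq_of_cos_sin.
    - apply (Rmult_eq_reg_l (exp (- Re p' * ln (INR m)))); lra.
    - apply (Rmult_eq_reg_l (exp (- Re p' * ln (INR m)))); lra.
    - rewrite <- Rmult_minus_distr_r, Rabs_mult, (Rabs_pos_eq (ln _)); lra. }
  apply Rmult_eq_reg_r in Him; [|lra].
  destruct p as [x y], p' as [x' y']. simpl in *. subst. reflexivity.
Qed.

Lemma npow_neg_2_inj_near (q p p' : C) : npow_neg 2 p = npow_neg 2 p' ->
  Cmod (Cminus p q) < 1/2 -> Cmod (Cminus p' q) < 1/2 -> p = p'.
Proof.
  intros E Hp Hp'. apply (npow_neg_inj_strip 2); [lia | exact E |].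
  assert (Him : Rabs (Im p - Im p') < 1).
  { replace (Im p - Im p') with (Im (Cminus (Cminus p q) (Cminus p' q)))
      by (destruct p, p', q; simpl; ring).
    eapply Rle_lt_trans; [apply Rabs_Im_le_Cmod|].
    eapply Rle_lt_trans; [apply Cmod_triangle|]. rewrite Cmod_opp. lra. }
  pose proof ln_INR_2_le_1. pose proof (ln_INR_S_pos 1 ltac:(lia)). pose proof PI2_1.
  assert (Rabs (Im p - Im p') * ln (INR 2) <= 1 * 1)
    by (apply Rmult_le_compat; [apply Rabs_pos | lra | lra | lra]).
  lra.
Qed.

Lemma Cmod_dmonomial (n : nat) (p : C) :
  Cmod (Cmult (RtoC (- ln (INR (S n)))) (npow_neg (S n) p)) =
  ln (INR (S n)) * exp (- Re p * ln (INR (S n))).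
Proof.
  rewrite Cmod_mult, Cmod_R, Cmod_npow_neg, Rabs_Ropp, Rabs_pos_eq by apply ln_INR_S_nonneg.
  reflexivity.
Qed.

Lemma Im_dmonomial (m : nat) (q : C) :
  Im (Cmult (RtoC (- ln (INR m))) (npow_neg m q)) =
  ln (INR m) * exp (- Re q * ln (INR m)) * sin (Im q * ln (INR m)).
Proof. unfold npow_neg, Cmult, RtoC. simpl. ring. Qed.

(** * Dirichlet series at large integers *)

Definition dterm_nat (a : nat -> C) (N k : nat) : C :=
  Cmult (a k) (RtoC (/ INR (S k) ^ N)).

Lemma dterm_at_nat (a : nat -> C) (N k : nat) :
  dterm a (RtoC (INR N)) k = dterm_nat a N k.
Proof. unfold dterm, dterm_nat. rewrite npow_neg_nat by lia. reflexivity. Qed.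

Definition coef_bounded (a : nat -> C) (M : R) (d : nat) : Prop :=
  forall k, Cmod (a k) <= M * INR (S k) ^ d.

(* Bounds the tail sum_{k>j} |a_k| ((j+1)/(k+1))^N when |a_k| <= M (k+1)^d and N >= d+2:
   each of its terms is dominated by a telescoping difference (scaled_term_bound). *)
Definition leading_err (M : R) (d j N : nat) : R :=
  2 * M * INR (S (S j)) ^ (d + 2) * (INR (S j) / INR (S (S j))) ^ N.

Lemma coef_bounded_nonneg (a : nat -> C) (M : R) (d : nat) :
  coef_bounded a M d -> 0 <= M.
Proof.
  intros Ha. specialize (Ha 0%nat). pose proof (Cmod_ge_0 (a 0%nat)).
  assert (0 < INR 1 ^ d) by (apply pow_lt; simpl; lra). nra.
Qed.

Lemma leading_err_nonneg (a : nat -> C) (M : R) (d j N : nat) :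
  coef_bounded a M d -> 0 <= leading_err M d j N.
Proof.
  intros Ha. pose proof (coef_bounded_nonneg a M d Ha). pose proof (INR_S_pos j).
  pose proof (INR_S_pos (S j)).
  unfold leading_err. repeat apply Rmult_le_pos; try apply pow_le; try apply Rdiv_le_0_compat; lra.
Qed.

Lemma leading_err_le (M : R) (d j N : nat) : 0 <= M ->
  leading_err M d j N <= 2 * M * INR (S (S j)) ^ (d + 2).
Proof.
  intros HM. unfold leading_err. rewrite <- (Rmult_1_r (2 * M * _)) at 2.
  apply Rmult_le_compat_l.
  - apply Rmult_le_pos; [lra | apply pow_le, pos_INR].
  - rewrite <- (pow1 N). apply pow_incr. split.
    + apply Rdiv_le_0_compat; [apply pos_INR | apply INR_S_pos].
    + pose proof (Rabs_INR_ratio_lt_1 (S j) (S (S j)) ltac:(lia) ltac:(lia)) as H.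
      apply Rabs_def2 in H. lra.
Qed.

Lemma leading_err_eventually_lt (M : R) (d j : nat) (eps : R) : 0 < eps ->
  exists N0, forall N, (N0 <= N)%nat -> leading_err M d j N < eps.
Proof.
  intros Heps.
  pose proof (is_lim_seq_scal_geom (2 * M * INR (S (S j)) ^ (d + 2)) (INR (S j) / INR (S (S j)))
                (Rabs_INR_ratio_lt_1 (S j) (S (S j)) ltac:(lia) ltac:(lia))) as L.
  apply is_lim_seq_spec in L. destruct (L (mkposreal eps Heps)) as [N0 HN0].
  exists N0. intros N HN. specialize (HN0 N HN). cbv beta in HN0.
  rewrite Rminus_0_r in HN0. apply Rabs_def2 in HN0. unfold leading_err. exact (proj1 HN0).
Qed.

Lemma scaled_term_bound (a : nat -> C) (M : R) (d j N n : nat) :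
  coef_bounded a M d -> (d + 2 <= N)%nat -> (j <= n)%nat ->
  Cmod (Cmult (RtoC (INR (S j) ^ N)) (dterm_nat a N (S n))) <=
  leading_err M d j N * (/ INR (S (S n)) - / INR (S (S (S n)))).
Proof.
  intros Ha HN Hjn. unfold leading_err.
  pose proof (coef_bounded_nonneg a M d Ha) as HM. specialize (Ha (S n)).
  destruct (Nat.le_exists_sub (d + 2) N HN) as [e [-> _]]. rewrite Nat.add_comm.
  set (x := INR (S (S n))) in *. set (y := INR (S (S j))). set (z := INR (S j)).
  assert (Hz : 1 <= z) by (apply (le_INR 1); lia).
  assert (Hzyx : z < y <= x) by (split; [apply lt_INR | apply le_INR]; lia).
  replace (INR (S (S (S n)))) with (x + 1) by (symmetry; apply S_INR).
  assert (Hterm : Cmod (Cmult (RtoC (z ^ (d + 2 + e))) (dterm_nat a (d + 2 + e) (S n)))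
                  = Cmod (a (S n)) * (z / x) ^ (d + 2 + e)).
  { unfold dterm_nat. fold x. rewrite !Cmod_mult, !Cmod_R, !Rabs_pos_eq.
    - unfold Rdiv. rewrite Rpow_mult_distr, pow_inv. ring.
    - left. apply Rinv_0_lt_compat, pow_lt. lra.
    - apply pow_le. lra. }
  rewrite Hterm.
  assert (0 <= (z / x) ^ (d + 2 + e)) by (apply pow_le, Rdiv_le_0_compat; lra).
  assert (0 <= (z / y) ^ (d + 2 + e) * y ^ (d + 2))
    by (apply Rmult_le_pos; apply pow_le; [apply Rdiv_le_0_compat|]; lra).
  apply Rle_trans with (M * x ^ d * (z / x) ^ (d + 2 + e)); [apply Rmult_le_compat_r; assumption|].
  replace (M * x ^ d * (z / x) ^ (d + 2 + e))
    with (M * ((z / x) ^ (d + 2 + e) * x ^ (d + 2)) * / (x * x)) by (rewrite (pow_add x d 2); field; lra).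
  apply Rle_trans with (M * ((z / y) ^ (d + 2 + e) * y ^ (d + 2)) * / (x * x)).
  - apply Rmult_le_compat_r; [left; apply Rinv_0_lt_compat; nra|].
    apply Rmult_le_compat_l; [assumption|]. apply pow_ratio_le; lra.
  - replace (2 * M * y ^ (d + 2) * (z / y) ^ (d + 2 + e) * (/ x - / (x + 1)))
      with (M * ((z / y) ^ (d + 2 + e) * y ^ (d + 2)) * (2 * (/ x - / (x + 1)))) by ring.
    apply Rmult_le_compat_l; [nra|]. apply inv_sq_le_telescope. lra.
Qed.

Lemma scaled_partial_sum_bound (a : nat -> C) (M : R) (d j N : nat) :
  coef_bounded a M d -> (forall k, (k < j)%nat -> a k = 0%C) -> (d + 2 <= N)%nat ->
  forall n, (j <= n)%nat ->
  Cmod (Cminus (Cmult (RtoC (INR (S j) ^ N)) (sum_n (dterm_nat a N) n)) (a j)) <=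
  leading_err M d j N * (1 - / INR (S (S n))).
Proof.
  intros Ha Hvan HN n Hjn. set (K := leading_err M d j N).
  induction Hjn as [|n Hjn IH].
  - rewrite sum_n_vanishing_below.
    2: { intros k Hk. unfold dterm_nat. rewrite (Hvan k Hk). apply Cmult_0_l. }
    unfold dterm_nat.
    assert (Hz : INR (S j) ^ N <> 0) by (apply pow_nonzero; pose proof (INR_S_pos j); lra).
    replace (Cminus (Cmult (RtoC (INR (S j) ^ N)) (Cmult (a j) (RtoC (/ INR (S j) ^ N)))) (a j))
      with (Cmult (a j) (Cminus (RtoC (INR (S j) ^ N * / INR (S j) ^ N)) 1))
      by (rewrite RtoC_mult; ring).
    rewrite Rinv_r by exact Hz.
    replace (Cminus (RtoC 1) 1) with (RtoC 0) by ring. rewrite Cmult_0_r, Cmod_0.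
    apply Rmult_le_pos.
    + exact (leading_err_nonneg a M d j N Ha).
    + assert (1 <= INR (S (S j))) by (apply (le_INR 1); lia).
      assert (/ INR (S (S j)) <= 1) by (rewrite <- Rinv_1; apply Rinv_le_contravar; lra). lra.
  - rewrite sum_Sn. change plus with Cplus.
    replace (Cminus (Cmult (RtoC (INR (S j) ^ N)) (Cplus (sum_n (dterm_nat a N) n) (dterm_nat a N (S n)))) (a j))
      with (Cplus (Cminus (Cmult (RtoC (INR (S j) ^ N)) (sum_n (dterm_nat a N) n)) (a j))
                  (Cmult (RtoC (INR (S j) ^ N)) (dterm_nat a N (S n)))) by ring.
    eapply Rle_trans; [apply Cmod_triangle|].
    replace (K * (1 - / INR (S (S (S n))))) with
      (K * (1 - / INR (S (S n))) + K * (/ INR (S (S n)) - / INR (S (S (S n))))) by ring.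
    apply Rplus_le_compat; [exact IH|]. exact (scaled_term_bound a M d j N n Ha HN Hjn).
Qed.

Lemma leading_coef_bound (a : nat -> C) (M : R) (d j N : nat) (A : C) :
  coef_bounded a M d -> (forall k, (k < j)%nat -> a k = 0%C) -> (d + 2 <= N)%nat ->
  is_series (dterm_nat a N) A ->
  Cmod (Cminus (Cmult (RtoC (INR (S j) ^ N)) A) (a j)) <= leading_err M d j N.
Proof.
  intros Ha Hvan HN HA. apply Rle_plus_epsilon. intros eps Heps.
  set (K := leading_err M d j N).
  set (zN := INR (S j) ^ N).
  assert (HzN : 0 < zN) by (apply pow_lt, INR_S_pos).
  destruct (is_series_C_eps _ _ HA (eps / zN)) as [N0 HN0]; [apply Rdiv_lt_0_compat; assumption|].
  set (n := (N0 + j)%nat).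
  pose proof (scaled_partial_sum_bound a M d j N Ha Hvan HN n ltac:(lia)) as Hn. fold K zN in Hn.
  specialize (HN0 n ltac:(lia)).
  replace (Cminus (Cmult (RtoC zN) A) (a j)) with
    (Cminus (Cminus (Cmult (RtoC zN) (sum_n (dterm_nat a N) n)) (a j))
            (Cmult (RtoC zN) (Cminus (sum_n (dterm_nat a N) n) A))) by ring.
  eapply Rle_trans; [apply Cmod_triangle|]. rewrite Cmod_opp, Cmod_RtoC_mult by lra.
  assert (zN * Cmod (Cminus (sum_n (dterm_nat a N) n) A) <= eps).
  { replace eps with (zN * (eps / zN)) by (field; lra). apply Rmult_le_compat_l; lra. }
  assert (K * (1 - / INR (S (S n))) <= K).
  { assert (0 <= / INR (S (S n))) by (left; apply Rinv_0_lt_compat, INR_S_pos).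
    assert (0 <= K) by exact (leading_err_nonneg a M d j N Ha). nra. }
  lra.
Qed.

(* Strong induction on k: once a_0, ..., a_{k-1} vanish, (k+1)^N A isolates a_k up to
   a geometrically small error, and the hypothesis makes (k+1)^N A itself geometrically small. *)
Lemma coef_zero_of_scaled_sum_bounded (a : nat -> C) (M : R) (d m : nat) (C0 : R) (N1 : nat) :
  coef_bounded a M d ->
  (forall N, (N1 <= N)%nat -> exists A, is_series (dterm_nat a N) A /\
     Cmod (Cmult (RtoC (INR m ^ N)) A) <= C0) ->
  forall k, (S k < m)%nat -> a k = 0%C.
Proof.
  intros Ha Hsum k. induction k as [k IH] using lt_wf_ind. intros Hkm.
  apply Cmod_eq_0, Rle_antisym; [|apply Cmod_ge_0].
  set (q := INR (S k) / INR m).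
  assert (Hq : 0 <= q) by (apply Rdiv_le_0_compat; [apply pos_INR | apply lt_0_INR; lia]).
  apply (le_0_of_le_geom _ (2 * M * INR (S (S k)) ^ (d + 2)) C0
           (INR (S k) / INR (S (S k))) q (N1 + (d + 2)));
    [apply Rabs_INR_ratio_lt_1; lia | apply Rabs_INR_ratio_lt_1; lia|].
  intros N HN. destruct (Hsum N ltac:(lia)) as [A [HA HC]].
  pose proof (leading_coef_bound a M d k N A Ha (fun i Hi => IH i Hi ltac:(lia)) ltac:(lia) HA) as Hlead.
  assert (Hm : INR (S k) ^ N = q ^ N * INR m ^ N).
  { unfold q. rewrite <- Rpow_mult_distr. f_equal. field. apply not_0_INR. lia. }
  replace (a k) with (Cminus (Cmult (RtoC (INR (S k) ^ N)) A)
                      (Cminus (Cmult (RtoC (INR (S k) ^ N)) A) (a k))) by ring.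
  eapply Rle_trans; [apply Cmod_triangle|]. rewrite Cmod_opp, Rplus_comm.
  apply Rplus_le_compat; [exact Hlead|].
  rewrite Hm, RtoC_mult, <- Cmult_assoc, Cmod_RtoC_mult by (apply pow_le, Hq).
  rewrite Rmult_comm. apply Rmult_le_compat_r; [apply pow_le, Hq | exact HC].
Qed.

Lemma coef_zero_of_sum_zero (a : nat -> C) (M : R) (d N1 : nat) :
  coef_bounded a M d -> (forall N, (N1 <= N)%nat -> is_series (dterm_nat a N) (RtoC 0)) ->
  forall k, a k = 0%C.
Proof.
  intros Ha Hsum k. apply (coef_zero_of_scaled_sum_bounded a M d (S (S k)) 0 N1 Ha); [|lia].
  intros N HN. exists (RtoC 0). split; [exact (Hsum N HN)|]. rewrite Cmult_0_r, Cmod_0. lra.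
Qed.

Lemma coef_vanish_of_sum_head (a : nat -> C) (M : R) (d N1 : nat) :
  coef_bounded a M d -> (forall N, (N1 <= N)%nat -> is_series (dterm_nat a N) (a 0%nat)) ->
  forall k, (1 <= k)%nat -> a k = 0%C.
Proof.
  intros Ha Hsum k Hk.
  set (a' := fun k => if Nat.eqb k 0 then RtoC 0 else a k).
  assert (Ha' : coef_bounded a' M d).
  { intros [|i]; [|apply Ha]. change (Cmod (RtoC 0) <= M * INR 1 ^ d). rewrite Cmod_0.
    apply Rmult_le_pos; [exact (coef_bounded_nonneg a M d Ha) | apply pow_le, pos_INR]. }
  replace (a k) with (a' k) by (destruct k; [lia | reflexivity]).
  apply (coef_zero_of_sum_zero a' M d N1 Ha'). intros N HN.
  apply is_series_decr_1.
  change (plus (RtoC 0) (opp (dterm_nat a' N 0)))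
    with (Cplus (RtoC 0) (Copp (Cmult (RtoC 0) (RtoC (/ INR 1 ^ N))))).
  replace (Cplus (RtoC 0) (Copp (Cmult (RtoC 0) (RtoC (/ INR 1 ^ N))))) with (RtoC 0) by ring.
  apply (is_series_incr_1 (dterm_nat a N)).
  change (plus (RtoC 0) (dterm_nat a N 0)) with (Cplus (RtoC 0) (Cmult (a 0%nat) (RtoC (/ INR 1 ^ N)))).
  replace (INR 1) with 1 by reflexivity. rewrite pow1, Rinv_1, Cmult_1_r, Cplus_0_l.
  exact (Hsum N HN).
Qed.

Lemma leading_coef_neq_0 (a : nat -> C) (M : R) (d j N1 : nat) (c : R) :
  coef_bounded a M d -> (forall k, (k < j)%nat -> a k = 0%C) -> 0 < c ->
  (forall N, (N1 <= N)%nat -> exists A, is_series (dterm_nat a N) A /\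
     c <= Cmod (Cmult (RtoC (INR (S j) ^ N)) A)) -> a j <> 0%C.
Proof.
  intros Ha Hvan Hc Hsum Hj. enough (c <= 0) by lra.
  apply (le_0_of_le_geom c (2 * M * INR (S (S j)) ^ (d + 2)) 0
           (INR (S j) / INR (S (S j))) 0 (N1 + (d + 2)));
    [apply Rabs_INR_ratio_lt_1; lia | rewrite Rabs_R0; lra |].
  intros N HN. destruct (Hsum N ltac:(lia)) as [A [HA HcA]].
  pose proof (leading_coef_bound a M d j N A Ha Hvan ltac:(lia) HA) as Hlead.
  rewrite Hj in Hlead. unfold Cminus in Hlead. rewrite Copp_0, Cplus_0_r in Hlead.
  unfold leading_err in Hlead. rewrite Rmult_0_l, Rplus_0_r. lra.
Qed.

Lemma sum_near_head (a : nat -> C) (M : R) (d N : nat) (p : C) :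
  coef_bounded a M d -> (d + 2 <= N)%nat -> is_series (dterm_nat a N) p ->
  Cmod (Cminus p (a 0%nat)) <= leading_err M d 0 N.
Proof.
  intros Ha HN Hp.
  pose proof (leading_coef_bound a M d 0 N p Ha (fun k Hk => ltac:(lia)) HN Hp) as Hlead.
  replace (INR (S 0) ^ N) with 1 in Hlead by (simpl; rewrite pow1; reflexivity).
  rewrite Cmult_1_l in Hlead. exact Hlead.
Qed.

Lemma Re_sum_near_head (a : nat -> C) (M : R) (d N : nat) (p : C) :
  coef_bounded a M d -> (d + 2 <= N)%nat -> is_series (dterm_nat a N) p ->
  Rabs (Re p - Re (a 0%nat)) <= 2 * M * INR 2 ^ (d + 2).
Proof.
  intros Ha HN Hp.
  replace (Re p - Re (a 0%nat)) with (Re (Cminus p (a 0%nat)))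
    by (destruct p, (a 0%nat); simpl; ring).
  eapply Rle_trans; [apply re_le_Cmod|]. eapply Rle_trans; [exact (sum_near_head a M d N p Ha HN Hp)|].
  apply leading_err_le, (coef_bounded_nonneg a M d Ha).
Qed.

Lemma sum_eventually_const_eq_head (a : nat -> C) (M : R) (d N0 : nat) (p0 : C) :
  coef_bounded a M d -> (forall N, (N0 <= N)%nat -> is_series (dterm_nat a N) p0) ->
  p0 = a 0%nat.
Proof.
  intros Ha Hsum.
  enough (Cmod (Cminus p0 (a 0%nat)) <= 0) as H0.
  { assert (E0 : Cminus p0 (a 0%nat) = RtoC 0)
      by (apply Cmod_eq_0; pose proof (Cmod_ge_0 (Cminus p0 (a 0%nat))); lra).
    replace p0 with (Cplus (Cminus p0 (a 0%nat)) (a 0%nat)) by ring. rewrite E0. ring. }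
  apply (le_0_of_le_geom _ (2 * M * INR 2 ^ (d + 2)) 0 (INR 1 / INR 2) 0 (N0 + (d + 2)));
    [apply Rabs_INR_ratio_lt_1; lia | rewrite Rabs_R0; lra|].
  intros N HN. rewrite Rmult_0_l, Rplus_0_r.
  exact (sum_near_head a M d N p0 Ha ltac:(lia) (Hsum N ltac:(lia))).
Qed.

Lemma coef_bounded_of_is_series (a : nat -> C) (N : nat) (p : C) :
  is_series (dterm_nat a N) p -> exists M, coef_bounded a M N.
Proof.
  intros Hp. destruct (is_series_C_eps _ _ Hp 1 Rlt_0_1) as [N0 HN0].
  destruct (bounded_of_eventually_bounded (fun k => Cmod (dterm_nat a N k)) (S N0) 2) as [B HB].
  { intros [|k] Hk; [lia|]. simpl.
    replace (dterm_nat a N (S k)) with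
      (Cminus (Cminus (sum_n (dterm_nat a N) (S k)) p) (Cminus (sum_n (dterm_nat a N) k) p))
      by (rewrite sum_Sn; change plus with Cplus; ring).
    eapply Rle_trans; [apply Cmod_triangle|]. rewrite Cmod_opp.
    pose proof (HN0 (S k) ltac:(lia)). pose proof (HN0 k ltac:(lia)). lra. }
  exists B. intros k. specialize (HB k). simpl in HB. unfold dterm_nat in HB.
  assert (Hpos : 0 < INR (S k) ^ N) by (apply pow_lt, INR_S_pos).
  rewrite Cmod_mult, Cmod_R, Rabs_pos_eq in HB by (left; apply Rinv_0_lt_compat, Hpos).
  apply (Rmult_le_reg_r (/ INR (S k) ^ N)); [apply Rinv_0_lt_compat, Hpos|].
  rewrite Rmult_assoc, Rinv_r by lra. lra.
Qed.

(* [monomial n] is (n+1)^{-s}, with the indexing of [Defs]. *)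
Definition monomial (n : nat) : nat -> C := fun k => if Nat.eqb k n then RtoC 1 else RtoC 0.

Lemma monomial_same (n : nat) : monomial n n = RtoC 1.
Proof. unfold monomial. rewrite Nat.eqb_refl. reflexivity. Qed.

Lemma monomial_other (n k : nat) : k <> n -> monomial n k = RtoC 0.
Proof. intros Hk. unfold monomial. rewrite (proj2 (Nat.eqb_neq k n) Hk). reflexivity. Qed.

Lemma monomial_in_H2 (n : nat) : in_H2 (monomial n).
Proof.
  exists 1. replace 1 with (Cmod (monomial n n) ^ 2) by (rewrite monomial_same, Cmod_1; ring).
  apply (is_series_single (V := R_NormedModule) (fun k => Cmod (monomial n k) ^ 2)).
  intros k Hk. rewrite monomial_other, Cmod_0 by exact Hk. apply Rmult_0_l.
Qed.

Lemma H2inner_single (a b : nat -> C) (n : nat) :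
  (forall k, k <> n -> Cmult (a k) (Cconj (b k)) = RtoC 0) ->
  H2inner a b = Cmult (a n) (Cconj (b n)).
Proof.
  intros Hab. unfold H2inner.
  rewrite (Series_single _ n), (Series_single (fun k => Im _) n)
    by (intros k Hk; rewrite (Hab k Hk); reflexivity).
  destruct (Cmult (a n) (Cconj (b n))); reflexivity.
Qed.

Lemma H2inner_monomial_r (g : nat -> C) (m : nat) : H2inner g (monomial m) = g m.
Proof.
  rewrite (H2inner_single _ _ m), monomial_same.
  - destruct (g m) as [x y]. unfold Cmult, Cconj; simpl. f_equal; ring.
  - intros k Hk. rewrite monomial_other by exact Hk.
    destruct (g k). unfold Cmult, Cconj, RtoC; simpl. f_equal; ring.
Qed.

Lemma H2inner_monomial_l (h : nat -> C) (n : nat) : H2inner (monomial n) h = Cconj (h n).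
Proof.
  rewrite (H2inner_single _ _ n), monomial_same.
  - destruct (h n) as [x y]. unfold Cmult, Cconj; simpl. f_equal; ring.
  - intros k Hk. rewrite monomial_other by exact Hk.
    destruct (h k). unfold Cmult, Cconj, RtoC; simpl. f_equal; ring.
Qed.

Lemma H2_coef_bounded (g : nat -> C) : in_H2 g -> exists M, coef_bounded g M 0.
Proof.
  intros Hg. exists (1 + Series (fun k => Cmod (g k) ^ 2)). intros k. simpl. rewrite Rmult_1_r.
  pose proof (term_le_Series (fun k => Cmod (g k) ^ 2) k (fun n => pow2_ge_0 _) Hg) as Hk.
  simpl in Hk. pose proof (Cmod_ge_0 (g k)).
  destruct (Rle_or_lt (Cmod (g k)) 1); nra.
Qed.

(** * D_Phi on monomials *)

Lemma DPhi_monomial (c0 : nat) (b : nat -> C) (n : nat) (g : nat -> C) :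
  DPhi_rel c0 b (monomial n) g -> exists N1, forall N, (N1 <= N)%nat -> exists p A,
    is_series (dterm_nat b N) p /\ is_series (dterm_nat g N) A /\
    Cmult (RtoC (INR (S n ^ c0) ^ N)) A = Cmult (RtoC (- ln (INR (S n)))) (npow_neg (S n) p).
Proof.
  intros [_ [sigma0 Hs]]. destruct (INR_unbounded sigma0) as [N1 HN1].
  exists N1. intros N HN.
  assert (Hre : sigma0 < Re (RtoC (INR N))) by (simpl; apply le_INR in HN; lra).
  destruct (Hs _ Hre) as [p [Hp [_ [v [Hv Hw]]]]].
  set (w := Cplus (Cmult (RtoC (INR c0)) (RtoC (INR N))) p) in Hw.
  exists p, v. split; [|split].
  - eapply is_series_ext; [intros k; apply dterm_at_nat | exact Hp].
  - eapply is_series_ext; [intros k; apply dterm_at_nat | exact Hv].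
  - assert (Ev : v = Cmult (RtoC (- ln (INR (S n)))) (npow_neg (S n) w)).
    { assert (E0 : dterm (dderiv (monomial n)) w n =
                     Cmult (RtoC (- ln (INR (S n)))) (npow_neg (S n) w))
        by (unfold dterm, dderiv; rewrite monomial_same; ring).
      rewrite <- E0. apply (is_series_C_unique _ _ _ Hw), is_series_single. intros k Hk.
      unfold dterm, dderiv. rewrite monomial_other by exact Hk.
      rewrite !Cmult_0_l. reflexivity. }
    rewrite Ev. unfold w. rewrite npow_neg_shift, pow_INR, <- pow_mult by lia.
    assert (Hq : INR (S n) ^ (c0 * N) <> 0) by (apply pow_nonzero; pose proof (INR_S_pos n); lra).
    replace (Cmult (RtoC (INR (S n) ^ (c0 * N))) (Cmult (RtoC (- ln (INR (S n))))
              (Cmult (RtoC (/ INR (S n) ^ (c0 * N))) (npow_neg (S n) p))))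
      with (Cmult (RtoC (INR (S n) ^ (c0 * N) * / INR (S n) ^ (c0 * N)))
              (Cmult (RtoC (- ln (INR (S n)))) (npow_neg (S n) p))) by (rewrite RtoC_mult; ring).
    rewrite Rinv_r by exact Hq. apply Cmult_1_l.
Qed.

Lemma DPhi_monomial_scaled_bounds (c0 : nat) (b : nat -> C) (M : R) (d n : nat) (g : nat -> C) :
  coef_bounded b M d -> DPhi_rel c0 b (monomial n) g ->
  exists N1, forall N, (N1 <= N)%nat -> exists A, is_series (dterm_nat g N) A /\
    ln (INR (S n)) * exp (- (Re (b 0%nat) + 2 * M * INR 2 ^ (d + 2)) * ln (INR (S n)))
      <= Cmod (Cmult (RtoC (INR (S n ^ c0) ^ N)) A) <=
    ln (INR (S n)) * exp ((2 * M * INR 2 ^ (d + 2) - Re (b 0%nat)) * ln (INR (S n))).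
Proof.
  intros Hb Hg. destruct (DPhi_monomial c0 b n g Hg) as [N1 HN1].
  exists (N1 + (d + 2))%nat. intros N HN.
  destruct (HN1 N ltac:(lia)) as [p [A [Hp [HA E]]]].
  exists A. split; [exact HA|]. rewrite E, Cmod_dmonomial.
  pose proof (Re_sum_near_head b M d N p Hb ltac:(lia) Hp) as Hre. apply Rabs_le_between in Hre.
  pose proof (ln_INR_S_nonneg n).
  split; apply Rmult_le_compat_l; [assumption | | assumption |]; apply exp_le; nra.
Qed.

Lemma DPhi_image_monomial (c0 : nat) (b : nat -> C) :
  DPhi_bounded c0 b -> forall n, exists g, DPhi_rel c0 b (monomial n) g.
Proof.
  intros [M0 Hbdd] n. destruct (Hbdd (monomial n) (monomial_in_H2 n)) as [g [Hg _]]. exists g. exact Hg.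
Qed.

Lemma DPhi_bounded_coef_bounded (c0 : nat) (b : nat -> C) :
  DPhi_bounded c0 b -> exists M d, coef_bounded b M d.
Proof.
  intros Hbdd. destruct (DPhi_image_monomial c0 b Hbdd 0) as [g Hg].
  destruct (DPhi_monomial c0 b 0 g Hg) as [N1 HN1].
  destruct (HN1 N1 (le_n _)) as [p [_ [Hp _]]].
  destruct (coef_bounded_of_is_series b N1 p Hp) as [M HM]. exists M, N1. exact HM.
Qed.

Lemma DPhi_monomial_0 (c0 : nat) (b : nat -> C) (g : nat -> C) :
  DPhi_rel c0 b (monomial 0) g -> forall k, g k = 0%C.
Proof.
  intros Hg. destruct (H2_coef_bounded g (proj1 Hg)) as [M HM].
  destruct (DPhi_monomial c0 b 0 g Hg) as [N1 HN1].
  apply (coef_zero_of_sum_zero g M 0 N1 HM). intros N HN.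
  destruct (HN1 N HN) as [p [A [_ [HA E]]]].
  replace (INR (S 0 ^ c0) ^ N) with 1 in E by (rewrite Nat.pow_1_l, pow1; reflexivity).
  replace (ln (INR (S 0))) with 0 in E by (symmetry; apply ln_1).
  rewrite Cmult_1_l, Ropp_0, Cmult_0_l in E. rewrite <- E. exact HA.
Qed.

Lemma DPhi_monomial_vanishes_below (c0 : nat) (b : nat -> C) (M : R) (d n : nat) (g : nat -> C) :
  coef_bounded b M d -> DPhi_rel c0 b (monomial n) g ->
  forall k, (S k < S n ^ c0)%nat -> g k = 0%C.
Proof.
  intros Hb Hg. destruct (H2_coef_bounded g (proj1 Hg)) as [Mg HMg].
  destruct (DPhi_monomial_scaled_bounds c0 b M d n g Hb Hg) as [N1 HN1].
  eapply (coef_zero_of_scaled_sum_bounded g Mg 0 (S n ^ c0) _ N1 HMg).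
  intros N HN. destruct (HN1 N HN) as [A [HA [_ Hhi]]]. exists A. split; [exact HA | exact Hhi].
Qed.

Lemma selfadjoint_monomial (c0 : nat) (b : nat -> C) (n m : nat) (g h : nat -> C) :
  DPhi_selfadjoint c0 b -> DPhi_rel c0 b (monomial n) g -> DPhi_rel c0 b (monomial m) h ->
  g m = Cconj (h n).
Proof.
  intros Hsa Hg Hh.
  pose proof (Hsa _ _ _ _ (monomial_in_H2 n) (monomial_in_H2 m) Hg Hh) as E.
  rewrite H2inner_monomial_r, H2inner_monomial_l in E. exact E.
Qed.

(** * Self-adjointness forces Phi(s) = s + c1 *)

Section SelfAdjointSymbol.

Variables (c0 : nat) (b : nat -> C).
Hypotheses (Hsa : DPhi_selfadjoint c0 b) (Hbdd : DPhi_bounded c0 b).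

Lemma selfadjoint_DPhi_monomial_at_0 (n : nat) (g : nat -> C) :
  DPhi_rel c0 b (monomial n) g -> g 0%nat = 0%C.
Proof.
  intros Hg. destruct (DPhi_image_monomial c0 b Hbdd 0) as [h Hh].
  rewrite (selfadjoint_monomial c0 b n 0 g h Hsa Hg Hh), (DPhi_monomial_0 c0 b h Hh n).
  exact Cconj_R0.
Qed.

Lemma selfadjoint_c0_eq_1 : c0 = 1%nat.
Proof.
  (* D_Phi e_2 has no terms n^{-s} with n < 2^c0 and a nonzero one at n = 2^c0.  By
     self-adjointness that coefficient is conjugate to the 2^{-s}-coefficient of
     D_Phi e_{2^c0}, which is 0: D_Phi e_1 = 0 when c0 = 0, and D_Phi e_{2^c0} starts at
     (2^c0)^c0 > 2 when c0 >= 2. *)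
  destruct (DPhi_bounded_coef_bounded c0 b Hbdd) as [M [d Hb]].
  destruct (DPhi_image_monomial c0 b Hbdd 1) as [g1 Hg1].
  destruct (H2_coef_bounded g1 (proj1 Hg1)) as [Mg HMg].
  destruct (DPhi_monomial_scaled_bounds c0 b M d 1 g1 Hb Hg1) as [N1 HN1].
  pose proof (Nat.pow_nonzero 2 c0 ltac:(lia)) as Hpow.
  set (j := (2 ^ c0 - 1)%nat).
  assert (Hj : S j = (S 1 ^ c0)%nat) by (unfold j; simpl; lia).
  assert (Hg1j : g1 j <> 0%C).
  { apply (leading_coef_neq_0 g1 Mg 0 j N1
      (ln (INR (S 1)) * exp (- (Re (b 0%nat) + 2 * M * INR 2 ^ (d + 2)) * ln (INR (S 1)))) HMg).
    - intros k Hk. apply (DPhi_monomial_vanishes_below c0 b M d 1 g1 Hb Hg1). lia.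
    - apply Rmult_lt_0_compat; [apply ln_INR_S_pos; lia | apply exp_pos].
    - intros N HN. destruct (HN1 N HN) as [A [HA [Hlo _]]]. exists A. rewrite Hj. split; assumption. }
  destruct (Nat.lt_trichotomy c0 1) as [Hc0|[Hc0|Hc0]]; [| exact Hc0 |]; exfalso; apply Hg1j.
  - replace j with 0%nat by (unfold j; replace c0 with 0%nat by lia; reflexivity).
    exact (selfadjoint_DPhi_monomial_at_0 1 g1 Hg1).
  - destruct (DPhi_image_monomial c0 b Hbdd j) as [gj Hgj].
    rewrite (selfadjoint_monomial c0 b 1 j g1 gj Hsa Hg1 Hgj).
    rewrite (DPhi_monomial_vanishes_below c0 b M d j gj Hb Hgj 1); [exact Cconj_R0|].
    rewrite Hj.
    assert (4 <= 2 ^ c0)%nat by (change 4%nat with (2 ^ 2)%nat; apply Nat.pow_le_mono_r; lia).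
    assert (2 ^ c0 <= (2 ^ c0) ^ c0)%nat
      by (rewrite <- (Nat.pow_1_r (2 ^ c0)) at 1; apply Nat.pow_le_mono_r; lia).
    simpl in *. lia.
Qed.

End SelfAdjointSymbol.

Section SelfAdjointShift.

Variable b : nat -> C.
Hypotheses (Hsa : DPhi_selfadjoint 1 b) (Hbdd : DPhi_bounded 1 b).

Lemma selfadjoint_DPhi_monomial_diag (n : nat) (g : nat -> C) :
  DPhi_rel 1 b (monomial n) g -> forall k, k <> n -> g k = 0%C.
Proof.
  intros Hg k Hk.
  destruct (DPhi_bounded_coef_bounded 1 b Hbdd) as [M [d Hb]].
  destruct (Nat.lt_gt_cases k n) as [[Hlt|Hgt] _]; [exact Hk|..].
  - apply (DPhi_monomial_vanishes_below 1 b M d n g Hb Hg). rewrite Nat.pow_1_r. lia.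
  - destruct (DPhi_image_monomial 1 b Hbdd k) as [gk Hgk].
    rewrite (selfadjoint_monomial 1 b n k g gk Hsa Hg Hgk).
    rewrite (DPhi_monomial_vanishes_below 1 b M d k gk Hb Hgk n); [exact Cconj_R0|].
    rewrite Nat.pow_1_r. lia.
Qed.

Lemma selfadjoint_DPhi_monomial_value (n : nat) (g : nat -> C) :
  DPhi_rel 1 b (monomial n) g -> exists N1, forall N, (N1 <= N)%nat -> exists p,
    is_series (dterm_nat b N) p /\ g n = Cmult (RtoC (- ln (INR (S n)))) (npow_neg (S n) p).
Proof.
  intros Hg. destruct (DPhi_monomial 1 b n g Hg) as [N1 HN1].
  exists N1. intros N HN. destruct (HN1 N HN) as [p [A [Hp [HA E]]]].
  exists p. split; [exact Hp|]. rewrite <- E.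
  assert (HA' : is_series (dterm_nat g N) (dterm_nat g N n)).
  { apply is_series_single. intros k Hk. unfold dterm_nat.
    rewrite (selfadjoint_DPhi_monomial_diag n g Hg k Hk). apply Cmult_0_l. }
  rewrite (is_series_C_unique _ _ _ HA HA'), Nat.pow_1_r. unfold dterm_nat.
  assert (Hq : INR (S n) ^ N <> 0) by (apply pow_nonzero; pose proof (INR_S_pos n); lra).
  replace (Cmult (RtoC (INR (S n) ^ N)) (Cmult (g n) (RtoC (/ INR (S n) ^ N))))
    with (Cmult (g n) (RtoC (INR (S n) ^ N * / INR (S n) ^ N))) by (rewrite RtoC_mult; ring).
  rewrite Rinv_r by exact Hq. symmetry. apply Cmult_1_r.
Qed.

Lemma selfadjoint_phi_at_nat :
  exists N0, forall N, (N0 <= N)%nat -> is_series (dterm_nat b N) (b 0%nat).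
Proof.
  (* D_Phi e_2 = -log 2 * 2^{-phi(N)} e_2, so 2^{-phi(N)} does not depend on N. *)
  destruct (DPhi_bounded_coef_bounded 1 b Hbdd) as [M [d Hb]].
  destruct (DPhi_image_monomial 1 b Hbdd 1) as [g1 Hg1].
  destruct (selfadjoint_DPhi_monomial_value 1 g1 Hg1) as [N1 HN1].
  destruct (leading_err_eventually_lt M d 0 (1/2) ltac:(lra)) as [N2 HN2].
  set (N0 := (N1 + N2 + (d + 2))%nat).
  assert (Hnear : forall N p, (N0 <= N)%nat -> is_series (dterm_nat b N) p ->
                    Cmod (Cminus p (b 0%nat)) < 1/2).
  { intros N p HN Hp. eapply Rle_lt_trans; [apply (sum_near_head b M d N p Hb); [lia|exact Hp]|].
    apply HN2. lia. }
  destruct (HN1 N0 ltac:(lia)) as [p0 [Hp0 Hg0]].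
  assert (Hconst : forall N, (N0 <= N)%nat -> is_series (dterm_nat b N) p0).
  { intros N HN. destruct (HN1 N ltac:(lia)) as [p [Hp Hg]].
    replace p0 with p; [exact Hp|].
    apply (npow_neg_2_inj_near (b 0%nat)); [| exact (Hnear N p HN Hp) | exact (Hnear N0 p0 (le_n _) Hp0)].
    apply (Cmult_RtoC_reg_l (- ln (INR 2))); [pose proof (ln_INR_S_pos 1 ltac:(lia)); lra|].
    rewrite <- Hg, <- Hg0. reflexivity. }
  exists N0. rewrite <- (sum_eventually_const_eq_head b M d N0 p0 Hb Hconst). exact Hconst.
Qed.

Lemma selfadjoint_phi_head_real : Im (b 0%nat) = 0.
Proof.
  destruct selfadjoint_phi_at_nat as [N0 HN0].
  assert (Hsin : forall n, (1 <= n)%nat -> sin (Im (b 0%nat) * ln (INR (S n))) = 0).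
  { intros n Hn. destruct (DPhi_image_monomial 1 b Hbdd n) as [g Hg].
    destruct (selfadjoint_DPhi_monomial_value n g Hg) as [N1 HN1].
    destruct (HN1 (N1 + N0)%nat ltac:(lia)) as [p [Hp Hgn]].
    rewrite (is_series_C_unique _ _ _ Hp (HN0 (N1 + N0)%nat ltac:(lia))) in Hgn.
    assert (Hreal : Im (g n) = 0).
    { pose proof (selfadjoint_monomial 1 b n n g g Hsa Hg Hg) as E.
      destruct (g n) as [x y]. injection E. simpl. lra. }
    rewrite Hgn, Im_dmonomial in Hreal.
    pose proof (ln_INR_S_pos n Hn). pose proof (exp_pos (- Re (b 0%nat) * ln (INR (S n)))).
    apply Rmult_integral in Hreal. destruct Hreal as [Hreal|]; [|assumption].
    apply Rmult_integral in Hreal. lra. }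
  apply sin_ln2_ln3_eq_0; [apply (Hsin 1%nat) | apply (Hsin 2%nat)]; lia.
Qed.

Lemma selfadjoint_phi_tail : forall k, (1 <= k)%nat -> b k = 0%C.
Proof.
  destruct (DPhi_bounded_coef_bounded 1 b Hbdd) as [M [d Hb]].
  destruct selfadjoint_phi_at_nat as [N0 HN0].
  exact (coef_vanish_of_sum_head b M d N0 Hb HN0).
Qed.

End SelfAdjointShift.

(** * The converse *)

Definition DPhi_eigenvalue (c1 : R) (i : nat) : R :=
  - ln (INR (S i)) * exp (- c1 * ln (INR (S i))).

Lemma Rabs_DPhi_eigenvalue_le (c1 : R) (D i : nat) : - c1 <= INR D ->
  Rabs (DPhi_eigenvalue c1 i) <= INR (S i) ^ S D.
Proof.
  intros HD. set (x := INR (S i)).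
  assert (Hx : 1 <= x) by (apply (le_INR 1); lia).
  pose proof (ln_INR_S_nonneg i) as HL. fold x in HL.
  unfold DPhi_eigenvalue. fold x.
  rewrite Rabs_mult, Rabs_Ropp, (Rabs_pos_eq (ln x) HL), (Rabs_pos_eq (exp _))
    by (left; apply exp_pos).
  simpl. apply Rmult_le_compat; [exact HL | left; apply exp_pos | |].
  - pose proof (exp_ineq1_le (ln x)) as H. rewrite exp_ln in H by lra. lra.
  - rewrite <- (exp_ln x) at 2 by lra. rewrite <- exp_INR_mult. apply exp_le. nra.
Qed.

Lemma coef_bounded_sub_eigenvalue (c1 : R) (D : nat) (f g : nat -> C) (Mf Mg : R) :
  - c1 <= INR D -> coef_bounded f Mf 0 -> coef_bounded g Mg 0 ->
  coef_bounded (fun i => Cminus (g i) (Cmult (f i) (RtoC (DPhi_eigenvalue c1 i)))) (Mg + Mf) (S D).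
Proof.
  intros HD Hf Hg i. specialize (Hf i). specialize (Hg i). simpl in Hf, Hg.
  rewrite Rmult_1_r in Hf, Hg.
  pose proof (Rabs_DPhi_eigenvalue_le c1 D i HD) as Hmu.
  assert (1 <= INR (S i) ^ S D) by (apply pow_R1_Rle, (le_INR 1); lia).
  unfold Cminus. eapply Rle_trans; [apply Cmod_triangle|].
  rewrite Cmod_opp, Cmod_mult, Cmod_R.
  pose proof (Cmod_ge_0 (f i)). pose proof (Cmod_ge_0 (g i)).
  pose proof (Rabs_pos (DPhi_eigenvalue c1 i)).
  assert (Cmod (f i) * Rabs (DPhi_eigenvalue c1 i) <= Mf * INR (S i) ^ S D)
    by (apply Rmult_le_compat; assumption).
  nra.
Qed.

Lemma DPhi_shift_coef (c1 : R) (b f g : nat -> C) :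
  (forall s, DS_has b s (RtoC c1)) -> in_H2 f -> DPhi_rel 1 b f g ->
  forall i, g i = Cmult (f i) (RtoC (DPhi_eigenvalue c1 i)).
Proof.
  intros Hb Hf Hg.
  destruct (H2_coef_bounded f Hf) as [Mf HMf].
  destruct (H2_coef_bounded g (proj1 Hg)) as [Mg HMg].
  destruct (INR_unbounded (- c1)) as [D HD].
  set (dd := fun i => Cminus (g i) (Cmult (f i) (RtoC (DPhi_eigenvalue c1 i)))).
  pose proof (coef_bounded_sub_eigenvalue c1 D f g Mf Mg ltac:(lra) HMf HMg) as Hdd.
  destruct Hg as [_ [sigma0 Hs]]. destruct (INR_unbounded sigma0) as [N1 HN1].
  intros i. enough (Hi : dd i = RtoC 0).
  { replace (g i) with (Cplus (dd i) (Cmult (f i) (RtoC (DPhi_eigenvalue c1 i))))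
      by (unfold dd; ring). rewrite Hi. ring. }
  apply (coef_zero_of_sum_zero dd (Mg + Mf) (S D) N1 Hdd). intros N HN.
  assert (Hre : sigma0 < Re (RtoC (INR N))) by (simpl; apply le_INR in HN; lra).
  destruct (Hs _ Hre) as [p [Hp [_ [v [Hv Hw]]]]].
  rewrite (is_series_C_unique _ _ _ Hp (Hb _)) in Hw.
  assert (Hw' : is_series (dterm_nat (fun i => Cmult (f i) (RtoC (DPhi_eigenvalue c1 i))) N) v).
  { apply (is_series_C_ext _ _ _ Hw). intros k. unfold dterm, dderiv, dterm_nat, DPhi_eigenvalue.
    rewrite npow_neg_shift, npow_neg_real, Nat.mul_1_l by lia.
    rewrite RtoC_mult. ring. }
  pose proof (is_series_minus _ _ _ _
    (is_series_ext _ _ _ (dterm_at_nat g N) Hv) Hw') as Hdiff.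
  change (plus v (opp v)) with (Cplus v (Copp v)) in Hdiff.
  replace (Cplus v (Copp v)) with (RtoC 0) in Hdiff by ring.
  apply (is_series_C_ext _ _ _ Hdiff). intros k.
  change (Cplus (dterm_nat g N k)
            (Copp (dterm_nat (fun i => Cmult (f i) (RtoC (DPhi_eigenvalue c1 i))) N k))
          = dterm_nat dd N k).
  unfold dterm_nat, dd. ring.
Qed.

Lemma DS_has_head (a : nat -> C) (s : C) :
  (forall k, (1 <= k)%nat -> a k = 0%C) -> DS_has a s (a 0%nat).
Proof.
  intros Ha. unfold DS_has.
  replace (a 0%nat) with (dterm a s 0).
  2: { unfold dterm, npow_neg. replace (INR 1) with 1 by reflexivity.
       rewrite ln_1, !Rmult_0_r, exp_0, cos_0, sin_0, Rmult_0_r, Ropp_0.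
       destruct (a 0%nat). unfold Cmult. simpl. f_equal; ring. }
  apply is_series_single. intros k Hk. unfold dterm. rewrite Ha by lia. apply Cmult_0_l.
Qed.

Theorem theorem4p1 (c0 : nat) (b : nat -> C)
  (hconv : exists s0 : C, ex_series (dterm b s0))
  (hbdd : DPhi_bounded c0 b) :
  DPhi_selfadjoint c0 b <->
  (c0 = 1%nat /\ exists c1 : R, forall s : C, DS_has b s (RtoC c1)).
Proof.
  split.
  - intros Hsa. pose proof (selfadjoint_c0_eq_1 c0 b Hsa hbdd) as Hc0. subst c0.
    split; [reflexivity|]. exists (Re (b 0%nat)). intros s.
    replace (RtoC (Re (b 0%nat))) with (b 0%nat).
    + apply DS_has_head, (selfadjoint_phi_tail b Hsa hbdd).
    + pose proof (selfadjoint_phi_head_real b Hsa hbdd) as Him.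
      destruct (b 0%nat) as [x y]. simpl in Him. subst y. reflexivity.
  - intros [Hc0 [c1 Hc1]] f h g k Hf Hh Hg Hk. subst c0.
    pose proof (DPhi_shift_coef c1 b f g Hc1 Hf Hg) as Eg.
    pose proof (DPhi_shift_coef c1 b h k Hc1 Hh Hk) as Ek.
    unfold H2inner. f_equal; apply Series_ext; intros i; rewrite Eg, Ek;
      destruct (f i) as [x y], (h i) as [x' y']; unfold Cmult, Cconj, RtoC; simpl; ring.
Qed.
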